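(* Let $A$ be a synaptic algebra and let $p,q\in P$ be in generic position ($p\wedge q=p\wedge q^{\perp}=p^{\perp}\wedge q=p^{\perp}\wedge q^{\perp}=0$). Let $c:=(pqp+p^{\perp}q^{\perp}p^{\perp})^{1/2}$, let $u$ and $v$ be the symmetries of the polar decompositions of $p-q^{\perp}$ and $p-q$, respectively, and put $j:=uvp+pvu$ (so that $q=c^2p+csj+s^2p^{\perp}$ with $s:=(pq^{\perp}p+p^{\perp}qp^{\perp})^{1/2}$). Let $z\in P$. Then $z\in C(p)\cap C(q)$ iff there exists a projection $t\in P$ such that $t=tp=pt\in C(c)$ and $z=t+jtj$.
   Context: Synaptic algebra (Foulis): $R$ is a real linear associative algebra with unit $1$, and $A\subseteq R$ is a real linear subspace with $1\in A$. For $a,b\in A$ write $aCb$ iff $ab=ba$; $C(a):=\{b\in A: aCb\}$; $CC(a):=\{b\in A: bCd \text{ for all } d\in C(a)\}$. $A$ is a synaptic algebra with enveloping algebra $R$ iff: (SA1) $A$ is a partially ordered archimedean real linear space with positive cone $A^+$, $1$ is an order unit, $\|\cdot\|$ the order-unit norm; (SA2) $a\in A\Rightarrow a^2\in A^+$; (SA3) $a,b\in A^+\Rightarrow aba\in A^+$; (SA4) if $a\in A$, $b\in A^+$, $aba=0$ then $ab=ba=0$; (SA5) if $a\in A^+$ there is $b\in A^+\cap CC(a)$ with $b^2=a$; (SA6) for $a\in A$ there is $p=p^2\in A$ with $ab=0\Leftrightarrow pb=0$ for all $b\in A$; (SA7) if $1\le a$ there is $b\in A$ with $ab=ba=1$;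 (SA8) if $a,b\in A$, $a_1\le a_2\le\cdots$ are pairwise commuting elements of $C(b)$ with $\|a-a_n\|\to0$, then $a\in C(b)$. $A$ is nondegenerate. Products are computed in $R$. $P:=\{p\in A:p=p^2\}$ with inherited order is an orthomodular lattice with $p^{\perp}:=1-p$, meet $\wedge$, join $\vee$. For $0\le a$, $a^{1/2}$ is its unique positive square root in $A$, $|a|:=(a^2)^{1/2}$; $a^{\circ}$ is the carrier of $a$ (the unique projection with $ab=0\Leftrightarrow a^{\circ}b=0$ for all $b\in A$). A symmetry is $u\in A$ with $u^2=1$. For $a\in A$, the signum $t$ of $a$ is the partial symmetry with $t^2=a^{\circ}$, $t\in CC(a)$, $a=|a|t=t|a|$; the symmetry of the polar decomposition of $a$ is $t+(a^{\circ})^{\perp}$. *)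

From mathcomp Require Import all_boot all_order all_algebra.
From mathcomp Require Import boolp classical_sets reals.
Set Implicit Arguments. Unset Strict Implicit. Unset Printing Implicit Defensive.
Import Order.TTheory GRing.Theory Num.Theory.
Local Open Scope ring_scope.
Local Open Scope classical_set_scope.

Section Synaptic.
Variables (R : realType) (V : algType R).
(* V is the enveloping algebra R of the paper; A is the synaptic algebra,
   pos its positive cone A^+. *)
Variables (A : V -> Prop) (pos : V -> Prop).

Definition sle (a b : V) : Prop := pos (b - a).

Definition commute (a b : V) : Prop := a * b = b * a.
Definition inC (a b : V) : Prop := A b /\ commute a b.
Definition inCC (a b : V) : Prop := A b /\ forall d, inC a d -> commute b d.

Definition ou_norm (a : V) : R :=
  inf [set l : R | 0 <= l /\ sle (- (l *: 1)) a /\ sle a (l *: 1)].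

Record synaptic : Prop := Synaptic {
  sa_sub0 : A 0;
  sa_sub1 : A 1;
  sa_subD : forall a b, A a -> A b -> A (a + b);
  sa_subZ : forall (l : R) a, A a -> A (l *: a);
  sa_posA : forall a, pos a -> A a;
  sa_pos0 : pos 0;
  sa_posD : forall a b, pos a -> pos b -> pos (a + b);
  sa_posZ : forall (l : R) a, 0 <= l -> pos a -> pos (l *: a);
  sa_posN : forall a, pos a -> pos (- a) -> a = 0;
  sa_archi : forall a b, A a -> A b ->
      (forall n : nat, sle (a *+ n) b) -> sle a 0;
  sa_unit : forall a, A a -> exists n : nat, sle (- (1 *+ n)) a /\ sle a (1 *+ n);
  sa2 : forall a, A a -> pos (a * a);
  sa3 : forall a b, pos a -> pos b -> pos (a * b * a);
  sa4 : forall a b, A a -> pos b -> a * b * a = 0 -> a * b = 0 /\ b * a = 0;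
  sa5 : forall a, pos a -> exists b, pos b /\ inCC a b /\ b * b = a;
  sa6 : forall a, A a -> exists p, A p /\ p = p * p /\
      (forall b, A b -> (a * b = 0 <-> p * b = 0));
  sa7 : forall a, A a -> sle 1 a -> exists b, A b /\ a * b = 1 /\ b * a = 1;
  sa8 : forall a b (an : nat -> V), A a -> A b ->
      (forall n, inC b (an n)) ->
      (forall n, sle (an n) (an n.+1)) ->
      (forall m n, commute (an m) (an n)) ->
      (forall e : R, 0 < e -> exists N, forall n, (N <= n)%N -> ou_norm (a - an n) < e) ->
      inC b a;
  sa_nondeg : exists a, A a /\ a <> 0
}.

Definition proj (p : V) : Prop := A p /\ p = p * p.
Definition perp (p : V) : V := 1 - p.

Definition is_meet (p q m : V) : Prop :=
  proj m /\ sle m p /\ sle m q /\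
  forall r, proj r -> sle r p -> sle r q -> sle r m.

Definition generic_position (p q : V) : Prop :=
  is_meet p q 0 /\ is_meet p (perp q) 0 /\
  is_meet (perp p) q 0 /\ is_meet (perp p) (perp q) 0.

Definition is_sqrt (a b : V) : Prop := A b /\ pos b /\ b * b = a.

Definition is_carrier (a e : V) : Prop :=
  proj e /\ forall b, A b -> (a * b = 0 <-> e * b = 0).

Definition is_signum (a t : V) : Prop :=
  A t /\ (exists e, is_carrier a e /\ t * t = e) /\ inCC a t /\
  exists abs, is_sqrt (a * a) abs /\ a = abs * t /\ a = t * abs.

Definition polar_symmetry (a u : V) : Prop :=
  exists t e, is_signum a t /\ is_carrier a e /\ u = t + perp e.

End Synaptic.

From Pilot Require Import Defs.
From mathcomp Require Import all_boot all_order all_algebra.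
From mathcomp Require Import boolp classical_sets reals.
Set Implicit Arguments. Unset Strict Implicit. Unset Printing Implicit Defensive.
Import Order.TTheory GRing.Theory Num.Theory.
Local Open Scope ring_scope.

(* Put a := p - q and b := p - q^perp, so that b^2 = c^2, a^2 = 1 - c^2 and
   ab = -ba.  Generic position forces the carriers of a and b to be 1, hence
   the polar symmetries v of a and u of b are symmetries with a = s v = v s,
   s := |a|, and b = c u = u c.  As a and b anticommute, u anticommutes with a
   and v with b; this gives u p u = q and v p v = q^perp, so uv conjugates p
   to p^perp and j = uv p + p vu is a symmetry exchanging p and p^perp and
   commuting with c and s.  The Peirce decomposition of q relative to p then
   reads q = c^2 p + c s j + s^2 p^perp.  A projection z commuting with p and q
   commutes with a and b, hence with u, v, j and c, and z = zp + j (zp) j;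
   conversely z = t + j t j with t <= p in C(c) commutes with p, c, s and j,
   hence with q. *)

Section AdditiveCancellation.
Variable V : zmodType.

Lemma addr_cancel_head (x S T : V) : S = - x + T -> T = 0 -> x + S = 0.
Proof. by move=> -> ->; rewrite addr0 subrr. Qed.

Lemma addr_cancel_headN (x S T : V) : S = x + T -> T = 0 -> - x + S = 0.
Proof. by move=> -> ->; rewrite addr0 addNr. Qed.

Lemma addr_pull (y z S T : V) : S = y + T -> z + S = y + (z + T).
Proof. by move=> ->; rewrite addrCA. Qed.

Lemma subr0_eq (x y : V) : x - y + 0 = 0 -> x = y.
Proof. by rewrite addr0 => /eqP; rewrite subr_eq0 => /eqP. Qed.

End AdditiveCancellation.

Ltac addr_pull_tac := first [ exact: erefl | apply: addr_pull; addr_pull_tac ].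

(* Decides an equation between signed sums of atoms: everything is moved to the
   left, then each summand is cancelled against an opposite occurrence. *)
Ltac group_solve :=
  apply: subr0_eq; rewrite ?subr0 ?opprD ?opprB ?opprK -?addrA;
  repeat first [ exact: erefl
               | apply: addr_cancel_head; [addr_pull_tac|]
               | apply: addr_cancel_headN; [addr_pull_tac|] ].

Ltac comm_solve :=
  repeat first [ assumption | apply: commr1 | apply: commrM | apply: commrD
               | apply: commrB | apply: commrN ].

Section Idempotents.
Variables (V : pzRingType) (p q : V).
Hypotheses (pp : p * p = p) (qq : q * q = q).

Let pr x : x * p * p = x * p. Proof. by rewrite -mulrA pp. Qed.
Let qr x : x * q * q = x * q. Proof. by rewrite -mulrA qq. Qed.
Local Ltac expand := repeat progress
  rewrite ?mulrDl ?mulrDr ?mulNr ?mulrN ?opprK ?mulr1 ?mul1r ?mulrA ?pp ?qq ?pr ?qr.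

Let a := p - q.
Let b := p - (1 - q).
Let X := p * q * p + (1 - p) * (1 - q) * (1 - p).

Lemma perp_idem : (1 - p) * (1 - p) = 1 - p.
Proof. by expand; group_solve. Qed.

Lemma sqr_sub_perp : b * b = X.
Proof. by rewrite /b /X; expand; group_solve. Qed.

Lemma sqr_sub : a * a = 1 - X.
Proof. by rewrite /a /X; expand; group_solve. Qed.

Lemma sub_perp_anticomm : a * b = - (b * a).
Proof. by rewrite /a /b; expand; group_solve. Qed.

Lemma compress_comm : p * X = X * p.
Proof. by rewrite /X; expand; group_solve. Qed.

Lemma peirce_decomposition : q = X * p + b * a * p + p * a * b + a * a * (1 - p).
Proof. by rewrite /a /b /X; expand; group_solve. Qed.

Lemma idem_mul_comm : p * q = q * p -> (p - p * q) * (p - p * q) = p - p * q.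
Proof. by move=> pq; expand; rewrite -(mulrA p q p) -pq; expand; group_solve. Qed.

End Idempotents.

Lemma jordan_sqr (V : pzRingType) (x y : V) :
  x * y + y * x = (x + y) * (x + y) - x * x - y * y.
Proof. by rewrite mulrDl !mulrDr; group_solve. Qed.

Lemma anticomm_sqr (V : pzRingType) (w x : V) :
  w * x = - (x * w) -> w * (x * x) = x * x * w.
Proof. by move=> h; rewrite mulrA h mulNr -(mulrA x w x) h mulrN opprK mulrA. Qed.

Lemma symmetry_conj_proj (R : numFieldType) (V : algType R) (w p q : V) :
  w * w = 1 -> w * (p - q) = - ((p - q) * w) ->
  w * (p - (1 - q)) = (p - (1 - q)) * w -> w * p * w = q.
Proof.
move=> ww ha hb.
have h1 : w * (p - (1 - q)) * w = p - (1 - q) by rewrite hb -mulrA ww mulr1.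
have h2 : w * (p - q) * w = - (p - q) by rewrite ha mulNr -mulrA ww mulr1.
have e : w * (p - (1 - q)) * w + w * (p - q) * w = (w * p * w) *+ 2 - 1.
  by rewrite !(mulrBr, mulrBl, mulr1, mul1r) ww mulr2n; group_solve.
have : (w * p * w) *+ 2 = q *+ 2.
  by apply: (addIr (- 1)); rewrite -e h1 h2 mulr2n; group_solve.
rewrite -!scaler_nat => /(congr1 (GRing.scale 2%:R^-1)).
by rewrite !scalerA mulVf ?scale1r // pnatr_eq0.
Qed.

Lemma exchange_symmetry (V : pzRingType) (p w w' : V) :
  p * p = p -> w * w' = 1 -> w' * w = 1 ->
  w * p * w' = 1 - p -> w' * p * w = 1 - p ->
  [/\ (w * p + p * w') * p * (w * p + p * w') = 1 - p,
      (w * p + p * w') * (w * p + p * w') = 1,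
      (w * p + p * w') * p = (1 - p) * (w * p + p * w') &
      p * (w * p + p * w') = (w * p + p * w') * (1 - p)].
Proof.
move=> pp ww w'w h1 h2.
have pw : p * w = w * (1 - p) by rewrite -h2 !mulrA ww mul1r.
have w'p : w' * p = (1 - p) * w' by rewrite -h2 -(mulrA (w' * p) w w') ww mulr1.
have p1p : (1 - p) * p = 0 by rewrite mulrBl mul1r pp subrr.
have pp1 : p * (1 - p) = 0 by rewrite mulrBr mulr1 pp subrr.
have jp : (w * p + p * w') * p = w * p.
  by rewrite mulrDl -mulrA pp -mulrA w'p mulrA pp1 mul0r addr0.
have e1 : w * p * (w * p) = 0.
  by rewrite !mulrA -(mulrA w p w) pw !mulrA -(mulrA (w * w) (1 - p) p) p1p mulr0.
have e2 : p * w' * (p * w') = 0 by rewrite !mulrA -(mulrA p w' p) w'p !mulrA pp1 !mul0r.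
have e3 : w * p * (p * w') = 1 - p by rewrite -mulrA (mulrA p p) pp mulrA.
have e4 : p * w' * (w * p) = p by rewrite -mulrA (mulrA w') w'w mul1r pp.
set j := w * p + p * w'.
have jpj : j * p * j = 1 - p by rewrite jp mulrDr e1 e3 add0r.
have jj : j * j = 1 by rewrite mulrDl !mulrDr e1 e2 e3 e4 add0r addr0 subrK.
split=> //.
  by rewrite -jpj -(mulrA (j * p)) jj mulr1.
by rewrite -jpj !mulrA jj mul1r.
Qed.

Section SynapticAlgebra.
Variables (R : realType) (V : algType R) (A pos : V -> Prop).
Hypothesis HS : synaptic A pos.

Lemma memA1 : A 1. Proof. exact: sa_sub1 HS. Qed.

Lemma memAD x y : A x -> A y -> A (x + y). Proof. exact: (sa_subD HS). Qed.

Lemma memAN x : A x -> A (- x).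
Proof. by move=> hx; rewrite -scaleN1r; apply: (sa_subZ HS). Qed.

Lemma memAB x y : A x -> A y -> A (x - y).
Proof. by move=> hx hy; apply/memAD/memAN. Qed.

Lemma memA_sqr x : A x -> A (x * x).
Proof. by move=> hx; apply/(sa_posA HS)/(sa2 HS). Qed.

Lemma memA_jordan x y : A x -> A y -> A (x * y + y * x).
Proof.
move=> hx hy; rewrite jordan_sqr.
by apply: memAB; [apply: memAB|]; apply: memA_sqr => //; apply: memAD.
Qed.

Lemma memA_comm x y : A x -> A y -> x * y = y * x -> A (x * y).
Proof.
move=> hx hy hxy.
have -> : x * y = 2%:R^-1 *: (x * y + y * x).
  by rewrite -hxy -mulr2n -scaler_nat scalerA mulVf ?scale1r // pnatr_eq0.
exact/(sa_subZ HS)/memA_jordan.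
Qed.

Lemma proj_pos x : proj A x -> pos x.
Proof. by case=> hx ->; apply: (sa2 HS). Qed.

Lemma proj_perp x : proj A x -> proj A (1 - x).
Proof. by case=> hx xx; split; [apply/memAB/hx/memA1 | rewrite perp_idem]. Qed.

Lemma pos1 : pos 1.
Proof. by rewrite -(mulr1 1); apply/(sa2 HS)/memA1. Qed.

Lemma sqr_eq0 x : A x -> x * x = 0 -> x = 0.
Proof.
move=> hx; rewrite -{1}(mulr1 x) => h.
by have [x1 _] := sa4 HS hx pos1 h; rewrite -(mulr1 x).
Qed.

(* [e y e = (k e)^2], where the square root [k] of [y] given by SA5 commutes with [e]. *)
Lemma pos_conj_comm e y : A e -> pos y -> y * e = e * y -> pos (e * y * e).
Proof.
move=> he hy hye; have [k [hk [[kA kC] kk]]] := sa5 HS hy.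
have ke : k * e = e * k by apply: kC.
have -> : e * y * e = (k * e) * (k * e) by rewrite -kk !mulrA -ke.
exact/(sa2 HS)/memA_comm.
Qed.

Lemma sqrt_eq_CC x b d : is_sqrt A pos x b -> pos d -> inCC A x d -> d * d = x -> b = d.
Proof.
move=> [bA [pb bb]] pd [dA dC] dd.
have db : d * b = b * d by apply: dC; split=> //; rewrite /Defs.commute -bb mulrA.
set e := b - d; have eA : A e by apply: memAB.
have eb : pos (e * b * e) by apply: pos_conj_comm; rewrite // /e mulrBl mulrBr db.
have ed : pos (e * d * e) by apply: pos_conj_comm; rewrite // /e mulrBl mulrBr db.
have sum0 : e * b * e + e * d * e = 0.
  rewrite -mulrDl -mulrDr.
  have -> : e * (b + d) = 0 by rewrite /e mulrBl !mulrDr bb dd db; group_solve.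
  by rewrite mul0r.
have eb0 : e * b * e = 0.
  apply: (sa_posN HS) => //.
  by rewrite -[X in pos X](addr0) -sum0 addrA addNr add0r.
have ed0 : e * d * e = 0 by move: sum0; rewrite eb0 add0r.
have [eb' _] := sa4 HS eA pb eb0; have [ed' _] := sa4 HS eA pd ed0.
have : e = 0 by apply: sqr_eq0 => //; rewrite {2}/e mulrBr eb' ed' subrr.
by move/eqP; rewrite subr_eq0 => /eqP.
Qed.

Lemma sqrt_CC x b : is_sqrt A pos x b -> inCC A x b.
Proof.
move=> hb; have [bA [pb bb]] := hb.
have px : pos x by rewrite -bb; apply: (sa2 HS).
have [d [pd [dC dd]]] := sa5 HS px.
by rewrite (sqrt_eq_CC hb pd dC dd).
Qed.

Lemma sqrt_uniq x b d : is_sqrt A pos x b -> is_sqrt A pos x d -> b = d.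
Proof. by move=> hb hd; have [_ [pd dd]] := hd; apply: sqrt_eq_CC hb pd (sqrt_CC hd) dd. Qed.

Lemma proj_le_mul x y : proj A x -> proj A y -> x * y = y * x -> sle pos (x * y) x.
Proof.
move=> [xA xx] [yA yy] xy; rewrite /sle -idem_mul_comm //.
exact/(sa2 HS)/(memAB xA)/memA_comm.
Qed.

Lemma proj_le_perp x f : proj A x -> proj A f -> x * f = 0 -> f * x = 0 -> sle pos f (1 - x).
Proof.
move=> hx hf xf fx; have hx' := proj_perp hx.
have xf' : (1 - x) * f = f by rewrite mulrBl mul1r xf subr0.
rewrite -{1}xf'; apply: proj_le_mul => //.
by rewrite xf' mulrBr mulr1 fx subr0.
Qed.

Lemma meet0_eq0 x y r : is_meet A pos x y 0 -> proj A r -> sle pos r x -> sle pos r y -> r = 0.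
Proof.
move=> [_ [_ [_ meet]]] hr rx ry.
by apply: (sa_posN HS (proj_pos hr)); have := meet r hr rx ry; rewrite /sle add0r.
Qed.

(* Without an involution, [f r e = 0] is obtained from [(f r e)^2 = 0] once
   [f r e] is known to lie in [A]. *)
Lemma proj_invariant_comm f r : proj A f -> proj A r -> r * f = f * r * f -> r * f = f * r.
Proof.
move=> hf hr hrf; have [fA ff] := hf; have [rA rr] := hr.
set e := 1 - f; have he : proj A e := proj_perp hf.
have ef : e * f = 0 by rewrite /e mulrBl mul1r -ff subrr.
have erf : e * r * f = 0 by rewrite -mulrA hrf !mulrA ef !mul0r.
have fre_A : A (f * r * e).
  have -> : f * r * e = r - f * r * f - e * r * e.
    rewrite -[LHS]addr0 -erf /e.
    by rewrite !(mulrBr, mulrBl, mulr1, mul1r) ?mulrA; group_solve.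
  apply: memAB; [apply: memAB => //|]; apply: (sa_posA HS);
    apply: (sa3 HS); exact: proj_pos.
have fre0 : f * r * e = 0.
  apply: (sqr_eq0 fre_A).
  by rewrite -!mulrA (mulrA e f) ef mul0r !mulr0.
by rewrite hrf -[in RHS](mulr1 (f * r)) -(subrK f 1) mulrDr -/e fre0 add0r.
Qed.

Lemma carrier_kernel_comm a e r : is_carrier A a e -> proj A r ->
  a * (r * (1 - e)) = 0 -> r * (1 - e) = (1 - e) * r.
Proof.
move=> [he car] hr arf; have [rA _] := hr.
have hf := proj_perp he; have [fA ff] := hf.
have af : a * (1 - e) = 0 by apply/car => //; rewrite mulrBr mulr1 -he.2 subrr.
set x := r * (1 - e) + (1 - e) * r.
have xA : A x by apply: memA_jordan.
have ex : e * x = 0 by apply/car => //; rewrite mulrDr arf mulrA af mul0r addr0.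
have xfx : x = (1 - e) * x by rewrite mulrBl mul1r ex subr0.
apply: proj_invariant_comm => //; apply: (addIr ((1 - e) * r)).
by rewrite -/x {1}xfx mulrDr !mulrA -ff.
Qed.

Lemma carrier_sub_eq1 p q e : proj A p -> proj A q ->
  is_meet A pos p q 0 -> is_meet A pos (perp p) (perp q) 0 ->
  is_carrier A (p - q) e -> e = 1.
Proof.
move=> hp hq m1 m2 hcar; have [[eA ee] car] := hcar.
have [pA pp] := hp; have [qA qq] := hq.
have hf : proj A (1 - e) := proj_perp hcar.1; have [fA ff] := hf.
set f := 1 - e in hf fA ff *.
have af : (p - q) * f = 0 by apply/car => //; rewrite /f mulrBr mulr1 -ee subrr.
have fa : f * (p - q) = 0.
  have afa : (p - q) * f * (p - q) = 0 by rewrite af mul0r.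
  by have [_ ->] := sa4 HS (memAB pA qA) (proj_pos hf) afa.
have pf_qf : p * f = q * f by apply/eqP; rewrite -subr_eq0 -mulrBl af.
have fp_fq : f * p = f * q by apply/eqP; rewrite -subr_eq0 -mulrBr fa.
have pf : p * f = f * p.
  apply: (carrier_kernel_comm hcar) hp _.
  by rewrite -/f mulrBl mulrA -pp pf_qf mulrA -qq subrr.
have qf : q * f = f * q.
  apply: (carrier_kernel_comm hcar) hq _.
  have pqf : p * (q * f) = q * f by rewrite -pf_qf mulrA -pp.
  by rewrite -/f mulrBl pqf mulrA -qq subrr.
have pf0 : p * f = 0.
  apply: (meet0_eq0 m1); first split.
  - exact: memA_comm.
  - by rewrite -mulrA (mulrA f) -pf -mulrA -ff mulrA -pp.
  - exact: proj_le_mul.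
  - by rewrite pf_qf; apply: proj_le_mul.
have qf0 : q * f = 0 by rewrite -pf_qf.
have f0 : f = 0.
  by apply: (meet0_eq0 m2) => //; apply: proj_le_perp => //; rewrite -?pf -?qf.
by apply/eqP; rewrite eq_sym -subr_eq0 -/f f0.
Qed.

Lemma carrier1_injective a : A a -> (forall e, is_carrier A a e -> e = 1) ->
  forall y, A y -> a * y = 0 -> y = 0.
Proof.
move=> aA car1 y yA ay; have [e [eA [ee car]]] := sa6 HS aA.
have he : is_carrier A a e by split.
by rewrite -(mul1r y) -(car1 _ he); apply/car.
Qed.

Lemma polar_symmetry_of_carrier1 a u : (forall e, is_carrier A a e -> e = 1) ->
  polar_symmetry A pos a u ->
  [/\ u * u = 1, inCC A a u & exists k, [/\ is_sqrt A pos (a * a) k, a = k * u & a = u * k]].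
Proof.
move=> car1 [t [e [[_ [[e' [he' tt]] [tC [k [hk [h1 h2]]]]]] [he ->]]]].
rewrite (car1 _ he) /perp subrr addr0; split=> //; first by rewrite tt (car1 _ he').
by exists k.
Qed.

(* [k] commutes with [x] because [x] commutes with [y * y]; then [w x + x w]
   is killed by the injective [y = w k]. *)
Lemma polar_anticomm x y k w : A x -> A w -> x * y = - (y * x) ->
  inCC A (y * y) k -> y = k * w -> y = w * k ->
  (forall z, A z -> y * z = 0 -> z = 0) -> w * x = - (x * w).
Proof.
move=> xA wA xy [kA kC] h1 h2 inj.
have kx : k * x = x * k by apply: kC; split=> //; symmetry; apply: anticomm_sqr.
have kg : k * (x * w + w * x) = 0.
  by rewrite mulrDr !mulrA kx -(mulrA x k w) -h1 xy addNr.
have g0 : x * w + w * x = 0.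
  by apply: inj; [exact: memA_jordan | rewrite {1}h2 -mulrA kg mulr0].
by apply/eqP; rewrite -addr_eq0 addrC g0.
Qed.

End SynapticAlgebra.

Section GenericPosition.
Variables (R : realType) (V : algType R) (A pos : V -> Prop) (p q c u v : V).
Hypotheses (HS : synaptic A pos) (hp : proj A p) (hq : proj A q).
Hypothesis gp : generic_position A pos p q.
Hypothesis hc : is_sqrt A pos (p * q * p + perp p * perp q * perp p) c.
Hypotheses (hu : polar_symmetry A pos (p - perp q) u)
           (hv : polar_symmetry A pos (p - q) v).

Let a := p - q.
Let b := p - perp q.
Let j := u * v * p + p * v * u.

Let pp : p * p = p. Proof. by rewrite -hp.2. Qed.
Let qq : q * q = q. Proof. by rewrite -hq.2. Qed.
Let aA : A a. Proof. exact: (memAB HS hp.1 hq.1). Qed.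
Let bA : A b. Proof. exact: (memAB HS hp.1 (proj_perp HS hq).1). Qed.
Let bb : b * b = c * c. Proof. by rewrite sqr_sub_perp // hc.2.2. Qed.
Let aa : a * a = 1 - c * c. Proof. by rewrite sqr_sub // hc.2.2. Qed.

Lemma carrier_sub_gp e : is_carrier A a e -> e = 1.
Proof. by case: gp => m1 [_ [_ m4]]; exact: (carrier_sub_eq1 HS hp hq m1 m4). Qed.

Lemma carrier_sub_perp_gp e : is_carrier A b e -> e = 1.
Proof.
case: gp => _ [m2 [m3 _]]; apply: (carrier_sub_eq1 HS hp (proj_perp HS hq) m2).
by rewrite /perp subKr.
Qed.

Lemma u_polar : [/\ u * u = 1, inCC A b u, b = c * u & b = u * c].
Proof.
have [uu uC [k [hk b1 b2]]] := polar_symmetry_of_carrier1 carrier_sub_perp_gp hu.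
have hc' : is_sqrt A pos (b * b) c by rewrite bb hc.2.2.
have kc : k = c := sqrt_uniq HS hk hc'.
by split; rewrite -?kc.
Qed.

Lemma v_polar :
  [/\ v * v = 1, inCC A a v & exists s, [/\ is_sqrt A pos (a * a) s, a = s * v & a = v * s]].
Proof. exact: (polar_symmetry_of_carrier1 carrier_sub_gp hv). Qed.

Lemma b_injective y : A y -> b * y = 0 -> y = 0.
Proof. exact/(carrier1_injective HS bA carrier_sub_perp_gp). Qed.

Lemma a_injective y : A y -> a * y = 0 -> y = 0.
Proof. exact/(carrier1_injective HS aA carrier_sub_gp). Qed.

Lemma u_anticomm : u * a = - (a * u).
Proof.
have [_ [uA _] b1 b2] := u_polar.
apply: (polar_anticomm HS aA uA (sub_perp_anticomm pp qq) _ b1 b2 b_injective).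
by rewrite bb hc.2.2; apply: (sqrt_CC HS hc).
Qed.

Lemma v_anticomm : v * b = - (b * v).
Proof.
have [_ [vA _] [s [hs a1 a2]]] := v_polar.
have ba : b * a = - (a * b) by rewrite (sub_perp_anticomm pp qq) opprK.
exact: (polar_anticomm HS bA vA ba (sqrt_CC HS hs) a1 a2 a_injective).
Qed.

Lemma u_conj_p : u * p * u = q.
Proof.
have [uu [_ uC] _ _] := u_polar.
by apply: (symmetry_conj_proj uu u_anticomm); apply: uC.
Qed.

Lemma v_conj_p : v * p * v = 1 - q.
Proof.
have [vv [_ vC] _] := v_polar.
apply: (symmetry_conj_proj vv v_anticomm).
by rewrite subKr; apply: vC.
Qed.

Lemma j_exchange :
  [/\ j * p * j = 1 - p, j * j = 1, j * p = (1 - p) * j & p * j = j * (1 - p)].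
Proof.
have [uu _ _ _] := u_polar; have [vv _ _] := v_polar.
have uqu : u * q * u = p by rewrite -u_conj_p !mulrA uu mul1r -mulrA uu mulr1.
have vqv : v * q * v = 1 - p.
  have -> : q = 1 - v * p * v by rewrite v_conj_p subKr.
  by rewrite mulrBr mulr1 mulrBl vv !mulrA vv mul1r -mulrA vv mulr1.
rewrite /j -(mulrA p v u); apply: exchange_symmetry => //.
- by rewrite mulrA -(mulrA u v v) vv mulr1.
- by rewrite mulrA -(mulrA v u u) uu mulr1.
- have -> : u * v * p * (v * u) = u * (v * p * v) * u by rewrite !mulrA.
  by rewrite v_conj_p mulrBr mulr1 mulrBl uu uqu.
- have -> : v * u * p * (u * v) = v * (u * p * u) * v by rewrite !mulrA.
  by rewrite u_conj_p vqv.
Qed.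

Lemma c_comm_p : c * p = p * c.
Proof. exact: ((sqrt_CC HS hc).2 p (conj hp.1 (esym (compress_comm q pp)))). Qed.

Lemma c_comm_u : c * u = u * c.
Proof. by have [_ _ b1 b2] := u_polar; rewrite -b1 -b2. Qed.

Lemma c_comm_v : c * v = v * c.
Proof.
have [_ [vA _] _] := v_polar; apply: ((sqrt_CC HS hc).2 v (conj vA _)).
by rewrite /Defs.commute -hc.2.2 -bb; symmetry; exact: (anticomm_sqr v_anticomm).
Qed.

Lemma c_comm_j : c * j = j * c.
Proof.
have cp := c_comm_p; have cu := c_comm_u; have cv := c_comm_v.
by rewrite /j; comm_solve.
Qed.

Lemma q_decomposition :
  exists s, [/\ inCC A (1 - c * c) s, s * p = p * s, s * j = j * s &
               q = c * c * p + c * s * j + s * s * (1 - p)].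
Proof.
have [_ [uA _] b1 b2] := u_polar; have [_ [vA vC] [s [hs a1 a2]]] := v_polar.
have [_ sC] := sqrt_CC HS hs.
have ua := u_anticomm; have va : v * a = a * v by apply: vC.
have cp := c_comm_p; have cv := c_comm_v; have cj := c_comm_j.
have sp : s * p = p * s.
  by apply: sC (conj hp.1 _); rewrite /Defs.commute aa; symmetry; comm_solve.
have su : s * u = u * s.
  by apply: sC (conj uA _); symmetry; apply: anticomm_sqr.
have sv : s * v = v * s.
  by apply: sC (conj vA _); symmetry; comm_solve.
have sc : s * c = c * s.
  by apply: sC (conj hc.1 _); rewrite /Defs.commute aa; symmetry; comm_solve.
have sj : s * j = j * s by rewrite /j; comm_solve.
exists s; split=> //; first by split; [exact: hs.1 | rewrite -aa].
have ba : b * a = c * s * (u * v) by rewrite b1 a1 !mulrA -(mulrA c u s) -su !mulrA.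
have ab : a * b = c * s * (v * u).
  by rewrite a1 b1 !mulrA -(mulrA s v c) -cv !mulrA sc.
have pcs : p * (c * s) = c * s * p by comm_solve.
rewrite {1}(peirce_decomposition pp qq) -(sqr_sub_perp pp qq) -/a -/b bb hs.2.2.
rewrite -(mulrA p a b) ab ba (mulrA p (c * s)) pcs /j (mulrDr (c * s)).
by rewrite !mulrA !addrA.
Qed.

Lemma decompose_of_commute_pq z : proj A z -> inC A p z -> inC A q z ->
  exists t, proj A t /\ t = t * p /\ t = p * t /\ inC A c t /\ z = t + j * t * j.
Proof.
move=> [zA zz] [_ pz] [_ qz].
have zp : z * p = p * z by [].
have zq : z * q = q * z by [].
have [_ [_ uC] _ _] := u_polar; have [_ [_ vC] _] := v_polar.
have zu : z * u = u * z.
  symmetry; apply: uC (conj zA _).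
  by rewrite /Defs.commute /b /perp; symmetry; comm_solve.
have zv : z * v = v * z.
  by symmetry; apply: vC (conj zA _); rewrite /Defs.commute /a; symmetry; comm_solve.
have zc : z * c = c * z.
  symmetry; apply: (sqrt_CC HS hc).2 (conj zA _).
  by rewrite /Defs.commute /perp; symmetry; comm_solve.
have zj : z * j = j * z by rewrite /j; comm_solve.
have [jpj _ _ _] := j_exchange.
exists (z * p); split; [|split; [|split; [|split]]].
- split; first exact: (memA_comm HS zA hp.1).
  by rewrite -mulrA (mulrA p z) -zp -mulrA pp mulrA -zz.
- by rewrite -mulrA pp.
- by rewrite mulrA -zp -mulrA pp.
- split; first exact: (memA_comm HS zA hp.1).
  by rewrite /Defs.commute mulrA -zc -!mulrA c_comm_p.
- rewrite (mulrA j z p) -zj -(mulrA z j p) -(mulrA z (j * p) j) jpj.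
  by rewrite mulrBr mulr1 addrC subrK.
Qed.

Lemma commute_pq_of_decompose z t : proj A z -> proj A t -> t = t * p -> t = p * t ->
  inC A c t -> z = t + j * t * j -> inC A p z /\ inC A q z.
Proof.
move=> [zA _] [tA _] tp pt [_ ct] zE.
have [_ jj jp pj] := j_exchange.
have zp : z * p = t.
  rewrite zE mulrDl -tp -(mulrA (j * t)) jp mulrA -(mulrA j t) mulrBr mulr1 -tp.
  by rewrite subrr mulr0 mul0r addr0.
have pz : p * z = t.
  rewrite zE mulrDr -pt !mulrA pj -(mulrA j) mulrBl mul1r -pt.
  by rewrite subrr mulr0 mul0r addr0.
have cz : c * z = z * c by rewrite zE; have cj := c_comm_j; comm_solve.
have zj : z * j = j * z.
  rewrite zE (mulrDl t (j * t * j)) (mulrDr j t (j * t * j)).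
  by rewrite -(mulrA (j * t)) jj mulr1 (mulrA j (j * t)) (mulrA j j) jj mul1r addrC.
have [s [[_ sC] sp sj qE]] := q_decomposition.
have sz : s * z = z * s.
  have cp := c_comm_p.
  by apply: sC (conj zA _); rewrite /Defs.commute; symmetry; comm_solve.
split; split=> //; first by rewrite /Defs.commute pz zp.
rewrite /Defs.commute qE; symmetry; have zp' : z * p = p * z by rewrite zp pz.
by comm_solve.
Qed.

End GenericPosition.

Theorem theorem8p3 (R : realType) (V : algType R) (A pos : V -> Prop)
  (p q c u v z : V) :
  synaptic A pos ->
  proj A p -> proj A q ->
  generic_position A pos p q ->
  is_sqrt A pos (p * q * p + perp p * perp q * perp p) c ->
  polar_symmetry A pos (p - perp q) u ->
  polar_symmetry A pos (p - q) v ->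
  proj A z ->
  (inC A p z /\ inC A q z <->
   exists t, proj A t /\ t = t * p /\ t = p * t /\ inC A c t /\
     z = t + (u * v * p + p * v * u) * t * (u * v * p + p * v * u)).
Proof.
move=> HS hp hq gp hc hu hv hz; split.
  by case=> hpz hqz; apply: (decompose_of_commute_pq HS hp hq gp hc hu hv hz hpz hqz).
case=> t [ht [tp [pt [ct zE]]]].
exact: (commute_pq_of_decompose HS hp hq gp hc hu hv hz ht tp pt ct zE).
Qed.
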